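(* In any convex resource theory, for any input state $\rho$ and output state $\rho'$, $H\big(\rho\,\big|\,V_{\mathcal F'}(\rho')^{-1}\big)\ge P(\rho\to\rho')\ge H\big(\rho\,\big|\,R^{\mathcal F'}_{\mathcal F'}(\rho')\big)$.
   Context: Finite dimensions; $\langle A,B\rangle=\mathrm{Tr}(AB)$; $A\le B$ means $B-A\ge0$; $\mathrm{id}$ is the identity operator. Input free set $\mathcal F$ and output free set $\mathcal F'$ are closed convex sets of density operators. $\mathrm{cone}(\mathcal F)=\{\lambda\sigma:\lambda\ge0,\sigma\in\mathcal F\}$, $A\le_{\mathcal F}B$ iff $B-A\in\mathrm{cone}(\mathcal F)$; $R^{\mathcal F}_{\max}(X\|Y)=\inf\{\lambda:X\le_{\mathcal F}\lambda Y\}$ ($\inf\emptyset=\infty$), $R^{\mathcal F}_{\mathcal F}(\rho)=\min_{\sigma\in\mathcal F}R^{\mathcal F}_{\max}(\rho\|\sigma)$. $V_{\mathcal F}(\rho)=\max_{\sigma\in\mathcal F}\langle\Pi_\rho,\sigma\rangle$ with $\Pi_\rho$ the projector onto $\operatorname{supp}\rho$; $0^{-1}=\infty$, $\infty^{-1}=0$. For $t\in\mathbb R_+\cup\{\infty\}$: $H(\rho\,|\,t)=\max\{\langle\rho,W\rangle:\ 0\le W\le Z\le\mathrm{id},\ \langle W,\rho\rangle=\langle Z,\rho\rangle,\ \langle W,\sigma\rangle\le\frac1t\langle Z,\sigma\rangle\ \forall\sigma\in\mathcal F\}$. $\mathbb O$: completely positive trace-non-increasing maps $\mathcal E$ such that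 for every $\sigma\in\mathcal F$ there exist $\sigma'\in\mathcal F'$ and $p\in[0,1]$ with $\mathcal E(\sigma)=p\sigma'$. $P(\rho\to\rho')=\max\{p:\ \mathcal E(\rho)=p\rho',\ \mathcal E\in\mathbb O\}$. *)

From HB Require Import structures.
From mathcomp Require Import all_boot all_order all_algebra.
From mathcomp Require Import all_classical all_reals all_analysis.
From mathcomp.real_closed Require Import complex.
Set Implicit Arguments. Unset Strict Implicit. Unset Printing Implicit Defensive.
Import Order.TTheory GRing.Theory Num.Theory.
Import numFieldNormedType.Exports.
Local Open Scope classical_set_scope.
Local Open Scope ring_scope.

Section QRT.
Variable R : realType.
Local Notation C := (R[i]).

Definition adjm (m n : nat) (A : 'M[C]_(m, n)) : 'M[C]_(n, m) :=
  \matrix_(i, j) Num.conj (A j i).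

(* A >= 0 : positive semidefinite (Hermitian, nonnegative quadratic form);
   0 <= z in C means z is real and nonnegative *)
Definition psd (n : nat) (A : 'M[C]_n) : Prop :=
  adjm A = A /\ forall v : 'cV[C]_n, 0 <= (adjm v *m A *m v) 0 0.

Definition loewner (n : nat) (A B : 'M[C]_n) : Prop := psd (B - A).

Definition density (n : nat) (A : 'M[C]_n) : Prop := psd A /\ \tr A = 1.

(* <A, B> = Tr(AB); all pairings used below are between Hermitian
   operators, hence real: we take the real part. *)
Definition ip (n : nat) (A B : 'M[C]_n) : R := complex.Re (\tr (A *m B)).

Definition free_set (n : nat) (F : set 'M[C]_n) : Prop :=
  (forall s, F s -> density s) /\
  (forall A B (t : R), F A -> F B -> 0 <= t <= 1 ->
      F ((t%:C)%C *: A + ((1 - t)%:C)%C *: B)) /\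
  closed (F : set 'M[(C : numFieldType) : topologicalType]_n).

Definition cone (n : nat) (F : set 'M[C]_n) : set 'M[C]_n :=
  [set X | exists l : R, 0 <= l /\ exists s, F s /\ X = (l%:C)%C *: s].

Definition leF (n : nat) (F : set 'M[C]_n) (A B : 'M[C]_n) : Prop := cone F (B - A).

(* R^F_max(X||Y) = inf { l : X <=_F l Y }  (inf of the empty set = +oo) *)
Definition Rmax (n : nat) (F : set 'M[C]_n) (X Y : 'M[C]_n) : \bar R :=
  ereal_inf [set (l%:E)%E | l in [set l : R | leF F X ((l%:C)%C *: Y)]].

Definition RFF (n : nat) (F : set 'M[C]_n) (rho : 'M[C]_n) : \bar R :=
  ereal_inf [set Rmax F rho s | s in F].

(* P is the (orthogonal) projector onto supp rho = range rho *)
Definition supp_proj (n : nat) (rho P : 'M[C]_n) : Prop :=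
  adjm P = P /\ P *m P = P /\ (P^T == rho^T)%MS.

Definition VF (n : nat) (F : set 'M[C]_n) (rho : 'M[C]_n) : \bar R :=
  ereal_sup [set x | exists P s, supp_proj rho P /\ F s /\ x = ((ip P s)%:E)%E].

Definition einv (x : \bar R) : \bar R :=
  match x with
  | EFin r => if r == 0 then +oo%E else ((r^-1)%:E)%E
  | +oo%E => 0%E
  | -oo%E => 0%E
  end.

Definition Hfun (n : nat) (F : set 'M[C]_n) (rho : 'M[C]_n) (t : \bar R) : \bar R :=
  ereal_sup [set ((ip rho W)%:E)%E | W in
    [set W | exists Z : 'M[C]_n,
       psd W /\ loewner W Z /\ loewner Z 1%:M /\
       ip W rho = ip Z rho /\
       (forall s, F s -> ((ip W s)%:E <= einv t * (ip Z s)%:E)%E)]].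

(* positivity of a k x k block operator sum_{ij} |i><j| (x) X i j on C^k (x) C^n *)
Definition blockpsd (k n : nat) (X : 'I_k -> 'I_k -> 'M[C]_n) : Prop :=
  (forall i j, X j i = adjm (X i j)) /\
  forall v : 'I_k -> 'cV[C]_n,
    0 <= \sum_(i < k) \sum_(j < k) (adjm (v i) *m X i j *m v j) 0 0.

(* complete positivity: id_k (x) E is positive for every k *)
Definition completely_positive (n m : nat) (E : 'M[C]_n -> 'M[C]_m) : Prop :=
  forall (k : nat) (X : 'I_k -> 'I_k -> 'M[C]_n),
    blockpsd X -> blockpsd (fun i j => E (X i j)).

Definition trace_nonincreasing (n m : nat) (E : 'M[C]_n -> 'M[C]_m) : Prop :=
  forall A : 'M[C]_n, psd A -> \tr (E A) <= \tr A.

Definition free_ops (n m : nat) (F : set 'M[C]_n) (F' : set 'M[C]_m)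
  : set {linear 'M[C]_n -> 'M[C]_m} :=
  [set E | completely_positive E /\ trace_nonincreasing E /\
     forall s, F s -> exists s' (p : R), F' s' /\ 0 <= p <= 1 /\ E s = (p%:C)%C *: s'].

Definition Ptrans (n m : nat) (F : set 'M[C]_n) (F' : set 'M[C]_m)
  (rho : 'M[C]_n) (rho' : 'M[C]_m) : \bar R :=
  ereal_sup [set (p%:E)%E | p in
    [set p : R | exists E, free_ops F F' E /\ E rho = (p%:C)%C *: rho']].

End QRT.

From HB Require Import structures.
From mathcomp Require Import all_boot all_order all_algebra.
From mathcomp Require Import all_classical all_reals all_analysis.
From mathcomp Require Import ring lra.
From mathcomp.real_closed Require Import complex.
Import Order.TTheory GRing.Theory Num.Theory Num.Def.
Import numFieldNormedType.Exports.
Local Open Scope classical_set_scope.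
Local Open Scope ring_scope.
Set Implicit Arguments. Unset Strict Implicit. Unset Printing Implicit Defensive.

(* Upper bound: if a free operation E maps rho to p rho', its Heisenberg dual
   turns W = E^*(Pi_rho') and Z = E^*(1) into a feasible pair of value p,
   since E maps each free sigma to q sigma' with sigma' free, whence
   <W, sigma> = q <Pi_rho', sigma'> <= q V = V <Z, sigma>.
   Lower bound: given a feasible pair (W, Z) and a decomposition
   rho' = l s - (l - 1) tau with s, tau free and l close to R = R(rho'),
   the measure-and-prepare map X |-> c <W, X> rho' + <Z - W, X> tau with
   c = (R - 1) / (l - 1) is a free operation sending rho to c <W, rho> rho':
   on a free sigma the constraint <W, sigma> <= <Z, sigma> / R keeps the
   weights of s and tau in the output nonnegative.  Letting l tend to R gives
   the bound; for R = 1 closedness of F' puts rho' in F', and for R = +oo,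
   W vanishes on F. *)

Section Hermitian.
Variable R : realType.
Local Notation C := R[i].

Lemma adjmE m n (A : 'M[C]_(m, n)) i j : adjm A i j = (A j i)^*.
Proof. by rewrite mxE. Qed.

Lemma adjm_trmxC m n (A : 'M[C]_(m, n)) : adjm A = map_mx conjC A^T.
Proof. by apply/matrixP => i j; rewrite !mxE. Qed.

Lemma adjmK m n (A : 'M[C]_(m, n)) : adjm (adjm A) = A.
Proof. by apply/matrixP => i j; rewrite !adjmE conjCK. Qed.

Lemma adjmM m n p (A : 'M[C]_(m, n)) (B : 'M[C]_(n, p)) :
  adjm (A *m B) = adjm B *m adjm A.
Proof.
apply/matrixP => i j; rewrite adjmE !mxE rmorph_sum; apply: eq_bigr => k _.
by rewrite !adjmE rmorphM mulrC.
Qed.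

Lemma adjmD m n (A B : 'M[C]_(m, n)) : adjm (A + B) = adjm A + adjm B.
Proof. by apply/matrixP => i j; rewrite !mxE rmorphD. Qed.

Lemma adjmB m n (A B : 'M[C]_(m, n)) : adjm (A - B) = adjm A - adjm B.
Proof. by apply/matrixP => i j; rewrite !mxE rmorphB. Qed.

Lemma adjmZ m n a (A : 'M[C]_(m, n)) : adjm (a *: A) = a^* *: adjm A.
Proof. by apply/matrixP => i j; rewrite !mxE rmorphM. Qed.

Lemma adjm0 m n : adjm (0 : 'M[C]_(m, n)) = 0.
Proof. by apply/matrixP => i j; rewrite !mxE rmorph0. Qed.

Lemma adjm1 n : adjm (1%:M : 'M[C]_n) = 1%:M.
Proof. by apply/matrixP => i j; rewrite !mxE eq_sym rmorph_nat. Qed.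

Lemma adjm_delta m n (i : 'I_m) (j : 'I_n) :
  adjm (delta_mx i j : 'M[C]_(m, n)) = delta_mx j i.
Proof. by apply/matrixP => k l; rewrite !mxE andbC rmorph_nat. Qed.

Lemma conj_mxtrace n (A : 'M[C]_n) : (\tr A)^* = \tr (adjm A).
Proof. by rewrite rmorph_sum; apply: eq_bigr => i _; rewrite adjmE. Qed.

Definition hform n (M : 'M[C]_n) (u v : 'cV[C]_n) : C := (adjm u *m M *m v) 0 0.

Lemma hform_tr n (M : 'M[C]_n) u v : hform M u v = \tr (M *m (v *m adjm u)).
Proof. by rewrite /hform -mulmxA -trace_mx11 mxtrace_mulC mulmxA. Qed.

Lemma hformDl n (M : 'M[C]_n) u1 u2 v : hform M (u1 + u2) v = hform M u1 v + hform M u2 v.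
Proof. by rewrite /hform adjmD !mulmxDl mxE. Qed.

Lemma hformDr n (M : 'M[C]_n) u v1 v2 : hform M u (v1 + v2) = hform M u v1 + hform M u v2.
Proof. by rewrite /hform !mulmxDr mxE. Qed.

Lemma hformZl n (M : 'M[C]_n) a u v : hform M (a *: u) v = a^* * hform M u v.
Proof. by rewrite /hform adjmZ -!scalemxAl mxE. Qed.

Lemma hformZr n (M : 'M[C]_n) a u v : hform M u (a *: v) = a * hform M u v.
Proof. by rewrite /hform -!scalemxAr mxE. Qed.

Lemma hformD n (M N : 'M[C]_n) u v : hform (M + N) u v = hform M u v + hform N u v.
Proof. by rewrite /hform mulmxDr mulmxDl mxE. Qed.

Lemma hformZ n (M : 'M[C]_n) a u v : hform (a *: M) u v = a * hform M u v.
Proof. by rewrite /hform -scalemxAr -scalemxAl mxE. Qed.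

Lemma hform_sum n (I : finType) (M : I -> 'M[C]_n) u v :
  hform (\sum_i M i) u v = \sum_i hform (M i) u v.
Proof. by rewrite /hform mulmx_sumr mulmx_suml summxE. Qed.

Lemma hform_delta n (M : 'M[C]_n) a b : hform M (delta_mx a 0) (delta_mx b 0) = M a b.
Proof. by rewrite /hform adjm_delta -rowE -colE !mxE. Qed.

Lemma hform_rank1 n (w u v : 'cV[C]_n) :
  hform (w *m adjm w) u v = ((adjm w *m u) 0 0)^* * (adjm w *m v) 0 0.
Proof.
rewrite /hform !mulmxA -(mulmxA (adjm u *m w)) [in LHS]mxE big_ord1 -adjmE.
by rewrite adjmM adjmK.
Qed.

Lemma hform_delta_comb n (M : 'M[C]_n) a b x :
  let v := delta_mx a 0 + x *: delta_mx b 0 in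
  hform M v v = M a a + x * M a b + x^* * M b a + x^* * x * M b b.
Proof.
by rewrite /= !(hformDl, hformDr, hformZl, hformZr) !hform_delta mulrDr mulrA addrA.
Qed.

End Hermitian.

Section Positivity.
Variable R : realType.
Local Notation C := R[i].

Lemma form_ge0_psd n (A : 'M[C]_n) : (forall v, 0 <= hform A v v) -> psd A.
Proof.
move=> A_ge0; split=> //; apply/matrixP => a b; rewrite adjmE.
have real_form v : (hform A v v)^* = hform A v v by rewrite geC0_conj.
have diag_real c : (A c c)^* = A c c by rewrite -hform_delta real_form.
have conj_cross x : x^* * (A a b)^* + x * (A b a)^* = x * A a b + x^* * A b a.
  move: (real_form (delta_mx a 0 + x *: delta_mx b 0)); rewrite hform_delta_comb.
  rewrite !(rmorphD, rmorphM) /= !diag_real conjCK [x * x^*]mulrC.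
  by rewrite -!addrA => /addrI; rewrite !addrA => /addIr; rewrite addrC.
have sum_eq := conj_cross 1; have diff_eq := conj_cross 'i.
rewrite conjCi rmorph1 !mul1r in sum_eq diff_eq.
have {}diff_eq : (A b a)^* - (A a b)^* = A a b - A b a.
  apply: (mulfI (@neq0Ci _)); move: diff_eq; rewrite !mulNr !mulrBr => h.
  by rewrite addrC h.
have -> : (A b a)^* = ((A a b)^* + (A b a)^* + ((A b a)^* - (A a b)^*)) / 2 by field.
by rewrite sum_eq diff_eq; field.
Qed.

Lemma psd_gram n p (M : 'M[C]_(n, p)) : psd (M *m adjm M).
Proof.
split; first by rewrite adjmM adjmK.
move=> v; have -> : adjm v *m (M *m adjm M) *m v = adjm (adjm M *m v) *m (adjm M *m v).
  by rewrite adjmM adjmK !mulmxA.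
by rewrite mxE sumr_ge0 // => i _; rewrite adjmE mulrC mul_conjC_ge0.
Qed.

Lemma psd0 n : psd (0 : 'M[C]_n).
Proof. by split=> [|v]; rewrite ?adjm0 // mulmx0 mul0mx mxE. Qed.

Lemma psd1 n : psd (1%:M : 'M[C]_n).
Proof. by have := psd_gram (1%:M : 'M[C]_n); rewrite adjm1 mulmx1. Qed.

Lemma psdD n (A B : 'M[C]_n) : psd A -> psd B -> psd (A + B).
Proof.
move=> [hA qA] [hB qB]; split=> [|v]; first by rewrite adjmD hA hB.
by rewrite -/(hform _ v v) hformD addr_ge0 ?qA ?qB.
Qed.

Lemma psdZ n a (A : 'M[C]_n) : 0 <= a -> psd A -> psd (a *: A).
Proof.
move=> a_ge0 [hA qA]; split=> [|v]; first by rewrite adjmZ hA geC0_conj.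
by rewrite -/(hform _ v v) hformZ mulr_ge0 ?qA.
Qed.

Lemma psd_sum_rank1 n (A : 'M[C]_n) :
  psd A -> exists u : 'I_n -> 'cV[C]_n, A = \sum_k u k *m adjm (u k).
Proof.
move=> [hA qA].
have /orthomx_spectralP A_spectral : A \is normalmx.
  by apply/normalmxP; rewrite -adjm_trmxC hA.
set P := spectralmx A in A_spectral; set d := spectral_diag A in A_spectral.
pose e k : 'cV[C]_n := delta_mx k 0.
have PP : P *m adjm P = 1%:M.
  by rewrite adjm_trmxC; apply/unitarymxP/spectral_unitarymx.
rewrite invmx_unitary ?spectral_unitarymx // -adjm_trmxC in A_spectral.
have A_sum : A = \sum_k d 0 k *: (adjm P *m e k) *m adjm (adjm P *m e k).
  rewrite {1}A_spectral.
  rewrite diag_mx_sum_delta mulmx_sumr mulmx_suml; apply: eq_bigr => k _.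
  rewrite adjmM adjmK /e adjm_delta !mulmxA -scalemxAr -!scalemxAl.
  by rewrite -(mulmxA (adjm P) (delta_mx k 0)) mul_delta_mx.
have d_ge0 k : 0 <= d 0 k.
  have := qA (adjm P *m e k).
  rewrite adjmM adjmK {1}A_spectral !mulmxA -(mulmxA _ P) PP mulmx1.
  by rewrite -(mulmxA _ P) PP mulmx1 -/(hform _ _ _) hform_delta mxE eqxx.
exists (fun k => sqrtC (d 0 k) *: (adjm P *m e k)); rewrite {1}A_sum.
apply: eq_bigr => k _; rewrite adjmZ -scalemxAr -!scalemxAl scalerA.
by rewrite geC0_conj ?sqrtC_ge0 // -expr2 sqrtCK.
Qed.

Lemma mxtrace_psdM_ge0 n (A B : 'M[C]_n) : psd A -> psd B -> 0 <= \tr (A *m B).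
Proof.
move=> /psd_sum_rank1 [u ->] [_ qB]; rewrite mulmx_suml raddf_sum /= sumr_ge0 // => k _.
by rewrite mxtrace_mulC -hform_tr qB.
Qed.

Lemma psd_entry_norm n (A : 'M[C]_n) i j : psd A -> `|A i j| *+ 2 <= A i i + A j j.
Proof.
move=> [hA qA]; have A_ji : A j i = (A i j)^* by rewrite -{1}hA adjmE.
have [->|z_neq0] := eqVneq (A i j) 0.
  by rewrite normr0 mul0rn addr_ge0 // -hform_delta qA.
set z := A i j in A_ji z_neq0 *.
have nz_neq0 : `|z| != 0 by rewrite normr_eq0.
have nz_conj : `|z|^* = `|z| by rewrite geC0_conj.
have zc : z^* = `|z| * `|z| / z by rewrite -expr2 normCK mulrAC divff // mul1r.
pose x := - z^* / `|z|.
have xc : x^* = - z / `|z| by rewrite /x !(rmorphM, rmorphN, fmorphV) /= conjCK nz_conj.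
have := qA (delta_mx i 0 + x *: delta_mx j 0).
rewrite -/(hform _ _ _) hform_delta_comb -/z A_ji.
have -> : x * z = - `|z| by rewrite /x zc; field; apply/andP.
have -> : x^* * z^* = - `|z| by rewrite xc zc; field; apply/andP.
have -> : x^* * x = 1 by rewrite xc /x zc; field; apply/andP.
rewrite mul1r mulr2n => h.
by rewrite -subr_ge0 (_ : _ - _ = A i i - `|z| - `|z| + A j j) //; ring.
Qed.

Lemma density_entry_le1 n (A : 'M[C]_n) i j : density A -> `|A i j| <= 1.
Proof.
move=> [hA trA1].
have diag_le1 k : A k k <= 1.
  rewrite -trA1 /mxtrace (bigD1 k) //= lerDl sumr_ge0 // => l _.
  by rewrite -hform_delta hA.2.
rewrite -(ler_pMn2r (_ : 0 < 2)%N) // (le_trans (psd_entry_norm i j hA)) //.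
by rewrite mulr2n lerD.
Qed.

End Positivity.

Section Pairing.
Variable R : realType.
Local Notation C := R[i].

Lemma ReB (x y : C) : complex.Re (x - y) = complex.Re x - complex.Re y.
Proof. by case: x; case: y. Qed.

Lemma Re_realM (a : R) (z : C) : complex.Re (a%:C * z)%C = a * complex.Re z.
Proof. by case: z => x y /=; rewrite mul0r subr0. Qed.

Lemma ipC n (A B : 'M[C]_n) : ip A B = ip B A.
Proof. by rewrite /ip mxtrace_mulC. Qed.

Lemma ipBl n (A B M : 'M[C]_n) : ip (A - B) M = ip A M - ip B M.
Proof. by rewrite /ip mulmxBl linearB ReB. Qed.

Lemma ip1l n (s : 'M[C]_n) : density s -> ip 1%:M s = 1.
Proof. by move=> [_ trs1]; rewrite /ip mul1mx trs1. Qed.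

Lemma mxtrace_psdM n (A B : 'M[C]_n) : psd A -> psd B -> \tr (A *m B) = ((ip A B)%:C)%C.
Proof.
move=> hA hB; have := mxtrace_psdM_ge0 hA hB; rewrite /ip.
by case: (\tr _) => x y /ger0_Im /= ->.
Qed.

Lemma ip_psd_ge0 n (A B : 'M[C]_n) : psd A -> psd B -> 0 <= ip A B.
Proof. by move=> hA hB; rewrite -ler0c -mxtrace_psdM ?mxtrace_psdM_ge0. Qed.

Lemma ip_loewner n (A B s : 'M[C]_n) : loewner A B -> psd s -> ip A s <= ip B s.
Proof. by move=> hAB hs; rewrite -subr_ge0 -ipBl ip_psd_ge0. Qed.

End Pairing.

Section CompletePositivity.
Variable R : realType.
Local Notation C := R[i].

Lemma cp_psd n m (E : 'M[C]_n -> 'M[C]_m) A : completely_positive E -> psd A -> psd (E A).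
Proof.
move=> cpE [hA qA].
have [_ qEA] : blockpsd (fun _ _ : 'I_1 => E A).
  by apply: cpE; split=> // v; rewrite !big_ord1; apply: qA.
by apply: form_ge0_psd => v; have := qEA (fun=> v); rewrite !big_ord1.
Qed.

Lemma cpD n m (E1 E2 : 'M[C]_n -> 'M[C]_m) :
  completely_positive E1 -> completely_positive E2 ->
  completely_positive (fun X => E1 X + E2 X).
Proof.
move=> cp1 cp2 k X hX; have [h1 q1] := cp1 k X hX; have [h2 q2] := cp2 k X hX.
split=> [i j|v]; first by rewrite adjmD -h1 -h2.
under eq_bigr do under eq_bigr do rewrite -/(hform _ _ _) hformD.
by under eq_bigr do rewrite big_split; rewrite big_split addr_ge0 ?q1 ?q2.
Qed.

End CompletePositivity.

Section MeasurePrepare.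
Variable R : realType.
Local Notation C := R[i].
Variables (n m : nat) (W : 'M[C]_n) (r : 'M[C]_m).

Definition mpmap (X : 'M[C]_n) : 'M[C]_m := \tr (W *m X) *: r.

Hypotheses (hW : psd W) (hr : psd r).

Lemma mpmap_cp : completely_positive mpmap.
Proof.
move=> k X [hX qX]; split=> [i j|v].
  rewrite /mpmap adjmZ hr.1 conj_mxtrace adjmM hW.1 -hX.
  by rewrite mxtrace_mulC.
have [w hw] := psd_sum_rank1 hW; have [u hu] := psd_sum_rank1 hr.
pose a l i := (adjm (u l) *m v i) 0 0.
have expand i j : hform (mpmap (X i j)) (v i) (v j) =
    \sum_l \sum_l' hform (X i j) (a l i *: w l') (a l j *: w l').
  rewrite /mpmap hformZ {1}hu hform_sum big_distrr; apply: eq_bigr => l _ /=.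
  rewrite hform_rank1 hw mulmx_suml raddf_sum big_distrl; apply: eq_bigr => l' _ /=.
  by rewrite hformZl hformZr mxtrace_mulC -hform_tr [LHS]mulrC [RHS]mulrA.
(* Move the sums over l and l' outside: each inner double sum over i, j is
   then the block form of X at the family i |-> a l i *: w l'. *)
under eq_bigr do under eq_bigr do rewrite -/(hform _ _ _) expand exchange_big.
under eq_bigr do rewrite exchange_big; rewrite exchange_big /=.
under eq_bigr do under eq_bigr do rewrite exchange_big.
under eq_bigr do rewrite exchange_big.
by rewrite sumr_ge0 // => l _; rewrite sumr_ge0 // => l' _; apply: qX.
Qed.

End MeasurePrepare.

Section Channels.
Variable R : realType.
Local Notation C := R[i].

Section TwoOutcomes.
Variables (n m : nat) (W1 W2 : 'M[C]_n) (r1 r2 : 'M[C]_m).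

Definition mpmap2 (X : 'M[C]_n) : 'M[C]_m := mpmap W1 r1 X + mpmap W2 r2 X.

Lemma mpmap2_is_linear : linear mpmap2.
Proof.
move=> a X Y; rewrite /mpmap2 /mpmap !mulmxDr -!scalemxAr !mxtraceD !mxtraceZ.
by rewrite !scalerDl scalerDr -!scalerA addrACA.
Qed.

HB.instance Definition _ := GRing.isLinear.Build C 'M[C]_n 'M[C]_m *:%R mpmap2 mpmap2_is_linear.

Lemma mpmap2_cp : psd W1 -> psd r1 -> psd W2 -> psd r2 -> completely_positive mpmap2.
Proof. by move=> hW1 hr1 hW2 hr2; apply: cpD; apply: mpmap_cp. Qed.

Lemma mpmap2_tni : \tr r1 = 1 -> \tr r2 = 1 -> loewner (W1 + W2) 1%:M ->
  trace_nonincreasing mpmap2.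
Proof.
move=> tr1 tr2 W12_le1 A hA; rewrite /mpmap2 /mpmap mxtraceD !mxtraceZ tr1 tr2 !mulr1.
by rewrite -mxtraceD -mulmxDl -subr_ge0 -{1}[A]mul1mx -linearB -mulmxBl mxtrace_psdM_ge0.
Qed.

End TwoOutcomes.

Section DualMap.
Variables (n m : nat) (E : {linear 'M[C]_n -> 'M[C]_m}).

Definition dualmap (Y : 'M[C]_m) : 'M[C]_n := \matrix_(a, b) \tr (Y *m E (delta_mx b a)).

Lemma mxtrace_dualmap Y X : \tr (dualmap Y *m X) = \tr (Y *m E X).
Proof.
rewrite {2}(matrix_sum_delta X) linear_sum mulmx_sumr raddf_sum /=.
rewrite [LHS]/mxtrace (eq_bigr (fun i => \sum_j dualmap Y i j * X j i)); last by move=> i _; rewrite mxE.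
rewrite exchange_big /=; apply: eq_bigr => a _.
rewrite linear_sum mulmx_sumr raddf_sum /=; apply: eq_bigr => b _.
by rewrite linearZ /= -scalemxAr mxtraceZ mxE mulrC.
Qed.

Lemma dualmapB Y1 Y2 : dualmap (Y1 - Y2) = dualmap Y1 - dualmap Y2.
Proof. by apply/matrixP => a b; rewrite !mxE mulmxBl linearB. Qed.

Lemma ip_dualmap Y X X' (q : R) : E X = (q%:C)%C *: X' -> ip (dualmap Y) X = q * ip Y X'.
Proof. by move=> EX; rewrite /ip mxtrace_dualmap EX -scalemxAr mxtraceZ Re_realM. Qed.

Lemma dualmap_psd Y : completely_positive E -> psd Y -> psd (dualmap Y).
Proof.
move=> cpE hY; apply: form_ge0_psd => v.
by rewrite hform_tr mxtrace_dualmap mxtrace_psdM_ge0 //; apply/cp_psd/psd_gram.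
Qed.

Lemma dualmap1_le1 : trace_nonincreasing E -> loewner (dualmap 1%:M) 1%:M.
Proof.
move=> tniE; apply: form_ge0_psd => v.
rewrite hform_tr mulmxBl linearB /= mxtrace_dualmap !mul1mx subr_ge0.
by apply: tniE; apply: psd_gram.
Qed.

End DualMap.
End Channels.

Section UpperBound.
Variable R : realType.
Local Notation C := R[i].

Lemma supp_proj_mulmx m (rho P : 'M[C]_m) : supp_proj rho P -> P *m rho = rho.
Proof.
move=> [_ [PP /andP[_ /submxP [D rhoT]]]].
by rewrite -[rho]trmxK rhoT trmx_mul trmxK mulmxA PP.
Qed.

Lemma supp_proj_psd m (rho P : 'M[C]_m) : supp_proj rho P -> psd P /\ loewner P 1%:M.
Proof.
move=> [hP [PP _]]; split; first by have := psd_gram P; rewrite hP PP.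
have := psd_gram (1%:M - P); rewrite adjmB adjm1 hP.
by rewrite mulmxBl mul1mx mulmxBr mulmx1 PP subrr subr0.
Qed.

Lemma einvK (x : \bar R) : x != -oo%E -> einv (einv x) = x.
Proof.
case: x => [r||] //= _; last by rewrite eqxx.
have [->|r_neq0] := eqVneq r 0; first by [].
by rewrite /= invr_eq0 (negPf r_neq0) invrK.
Qed.

Lemma Hfun_ge_free_op n m (F : set 'M[C]_n) (F' : set 'M[C]_m) rho rho'
    (E : {linear 'M[C]_n -> 'M[C]_m}) (p : R) (P : 'M[C]_m) (t : \bar R) :
  (forall s, F' s -> density s) -> density rho' ->
  free_ops F F' E -> E rho = (p%:C)%C *: rho' ->
  psd P -> loewner P 1%:M -> P *m rho' = rho' ->
  (forall s', F' s' -> ((ip P s')%:E <= einv t)%E) ->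
  (p%:E <= Hfun F rho t)%E.
Proof.
move=> F'_density [hrho' trrho'] [cpE [tniE freeE]] Erho hP P_le1 Prho' P_bound.
set W := dualmap E P; set Z := dualmap E 1%:M.
have ipW_rho : ip W rho = p by rewrite (ip_dualmap _ Erho) /ip Prho' trrho' /= mulr1.
have ipZ_rho : ip Z rho = p by rewrite (ip_dualmap _ Erho) ip1l ?mulr1.
apply: ereal_sup_ubound; exists W; last by rewrite ipC ipW_rho.
exists Z; split; first exact: dualmap_psd.
split; first by rewrite /loewner -dualmapB; apply: dualmap_psd.
split; first exact: dualmap1_le1.
split; first by rewrite ipW_rho ipZ_rho.
move=> s /freeE [s' [q [hs' [/andP[q_ge0 _] Es]]]].
rewrite (ip_dualmap _ Es) (ip_dualmap _ Es) (ip1l (F'_density _ hs')) mulr1 EFinM.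
by rewrite muleC lee_wpmul2r ?lee_fin ?P_bound.
Qed.

Lemma Ptrans_le_Hfun n m (F : set 'M[C]_n) (F' : set 'M[C]_m) rho rho' :
  (forall s, F' s -> density s) -> density rho' ->
  (Ptrans F F' rho rho' <= Hfun F rho (einv (VF F' rho')))%E.
Proof.
move=> F'_density hrho'; apply: ge_ereal_sup => _ [p [E [freeE Erho]] <-].
have [VF_Ny|VF_neqNy] := eqVneq (VF F' rho') -oo%E.
  (* Then [einv (einv (VF F' rho')) = +oo] and any [P] will do. *)
  apply: (Hfun_ge_free_op F'_density hrho' freeE Erho (@psd1 R m)); rewrite ?mul1mx //.
    by rewrite /loewner subrr; apply: psd0.
  by move=> s' _; rewrite VF_Ny /= eqxx leey.
have /set0P [_ [P [_ [hP _]]]] :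
    [set x | exists P s, supp_proj rho' P /\ F' s /\ x = ((ip P s)%:E)%E] != set0.
  by apply/eqP => VF0; move: VF_neqNy; rewrite /VF VF0 ereal_sup0 eqxx.
have [P_psd P_le1] := supp_proj_psd hP.
apply: (Hfun_ge_free_op F'_density hrho' freeE Erho P_psd P_le1 (supp_proj_mulmx hP)).
by move=> s' hs'; rewrite einvK //; apply: ereal_sup_ubound; exists P, s'.
Qed.

End UpperBound.

Section Robustness.
Variable R : realType.
Local Notation C := R[i].

Lemma closed_entrywise_approx m (A : set 'M[C]_m) (x : 'M[C]_m) :
  closed (A : set 'M[(C : numFieldType) : topologicalType]_m) ->
  (forall e : R, 0 < e -> exists2 s, A s & forall i j, `|x i j - s i j| < (e%:C)%C) ->
  A x.
Proof.
move=> A_closed approx; apply: A_closed => U /nbhs_ballP [e e_gt0 xeU].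
have eE : e = ((complex.Re e)%:C)%C.
  by move: e_gt0; rewrite /= ltcE => /andP[/eqP Im_e _]; apply/eqP; rewrite eq_complex /= Im_e !eqxx.
have [|s As x_s] := approx (complex.Re e); first by move: e_gt0; rewrite /= ltcE => /andP[].
exists s; split=> //; apply: xeU; split=> // i j.
by rewrite -ball_normE /ball_ /= eE.
Qed.

Variables (m : nat) (F' : set 'M[C]_m).
Hypothesis hF' : free_set F'.

Lemma free_subconv s tau (a b : R) : F' s -> F' tau -> 0 <= a -> 0 <= b -> a + b <= 1 ->
  exists s' q, [/\ F' s', 0 <= q <= 1 &
    (a%:C)%C *: s + (b%:C)%C *: tau = (q%:C)%C *: s'].
Proof.
move=> Fs Ftau a_ge0 b_ge0 ab_le1; have [_ [F'_conv _]] := hF'.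
have [ab0|ab_neq0] := eqVneq (a + b) 0.
  have [-> ->] : a = 0 /\ b = 0 by split; lra.
  by exists s, 0; rewrite lexx ler01 !scale0r addr0.
have ab_gt0 : 0 < a + b by rewrite lt_neqAle eq_sym ab_neq0 addr_ge0.
exists ((((a / (a + b))%:C)%C *: s + (((1 - a / (a + b))%:C)%C *: tau))), (a + b).
split; first (apply: F'_conv => //; apply/andP; split).
- by rewrite divr_ge0 // ltW.
- by rewrite ler_pdivrMr // mul1r lerDl.
- by rewrite (ltW ab_gt0) ab_le1.
rewrite scalerDr !scalerA -!rmorphM /=; congr (_%:C *: _ + _%:C *: _)%C; field.
  by rewrite ab_neq0.
by rewrite ab_neq0.
Qed.

Variable rho' : 'M[C]_m.
Hypothesis hrho' : density rho'.

Lemma leF_decomp s (l : R) : F' s -> leF F' rho' ((l%:C)%C *: s) ->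
  1 <= l /\ exists2 tau, F' tau & rho' = (l%:C)%C *: s - ((l - 1)%:C)%C *: tau.
Proof.
move=> Fs [k [k_ge0 [tau [Ftau tauE]]]].
have [[_ trs] [_ trtau]] := (hF'.1 _ Fs, hF'.1 _ Ftau).
have kE : k = l - 1.
  move/(congr1 mxtrace): tauE; rewrite linearB !linearZ /= trs trtau hrho'.2 !mulr1.
  by move=> trE; apply: complexI; rewrite rmorphB rmorph1 /= trE.
split; first by rewrite -subr_ge0 -kE.
by exists tau => //; rewrite -kE -tauE opprB addrC subrK.
Qed.

Lemma RFF_ge1 : (1%:E <= RFF F' rho')%E.
Proof.
apply: le_ereal_inf_tmp => _ [s Fs <-]; apply: le_ereal_inf_tmp => _ [l hl <-].
by rewrite lee_fin; case: (leF_decomp Fs hl).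
Qed.

Lemma RFF_lt_decomp (la : R) : (RFF F' rho' < la%:E)%E ->
  exists s l tau, [/\ F' s, F' tau, (RFF F' rho' <= l%:E)%E, l < la &
    rho' = (l%:C)%C *: s - ((l - 1)%:C)%C *: tau].
Proof.
move=> /ereal_inf_lt [_ [s Fs <-]] /ereal_inf_lt [_ [l hl <-]]; rewrite lte_fin => l_lt.
have [_ [tau Ftau rho'E]] := leF_decomp Fs hl.
exists s, l, tau; split=> //.
apply: le_trans (ereal_inf_lbound _) _; first by exists s.
by apply: ereal_inf_lbound; exists l.
Qed.

Lemma RFF_eq1_mem : RFF F' rho' = 1%:E -> F' rho'.
Proof.
move=> RFF1; apply: (closed_entrywise_approx hF'.2.2) => e e_gt0.
have [|s [l [tau [Fs Ftau l_ge1 l_lt rho'E]]]] := RFF_lt_decomp (la := 1 + e / 4).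
  by rewrite RFF1 lte_fin; lra.
rewrite RFF1 lee_fin in l_ge1.
exists s => // i j.
have -> : rho' i j - s i j = ((l - 1)%:C)%C * (s i j - tau i j).
  by rewrite rho'E !mxE rmorphB /=; ring.
rewrite normrM ger0_norm ?ler0c ?subr_ge0 //.
have entry_le2 : `|s i j - tau i j| <= 2.
  by rewrite (le_trans (ler_normB _ _)) // mulr2n lerD // density_entry_le1 //; apply: hF'.1.
apply: le_lt_trans (ler_wpM2l _ entry_le2) _; first by rewrite ler0c subr_ge0.
have -> : ((l - 1)%:C)%C * 2 = (((l - 1) * 2)%:C)%C by rewrite rmorphM /= rmorph_nat.
by rewrite ltcR; lra.
Qed.

End Robustness.

Section LowerBound.
Variable R : realType.
Local Notation C := R[i].
Variables (n m : nat) (F : set 'M[C]_n) (F' : set 'M[C]_m).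
Variables (rho : 'M[C]_n) (rho' : 'M[C]_m) (W Z : 'M[C]_n).
Hypotheses (F_density : forall s, F s -> density s) (hF' : free_set F').
Hypotheses (hrho : density rho) (hrho' : density rho').
Hypotheses (hW : psd W) (hWZ : loewner W Z) (hZ1 : loewner Z 1%:M).
Hypothesis ipWZ_rho : ip W rho = ip Z rho.

Local Notation Y := (Z - W).
Local Notation p := (ip W rho).
Local Notation mp c tau := (mpmap2 ((c%:C)%C *: W) Y rho' tau).

Lemma ip_free_bounds s : F s -> [/\ 0 <= ip W s, 0 <= ip Y s & ip W s + ip Y s <= 1].
Proof.
move=> /F_density hs; have s_psd := hs.1.
by rewrite !ip_psd_ge0 // ipBl addrC subrK -(ip1l hs) ip_loewner.
Qed.

Lemma mpE c tau s : density s ->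
  mp c tau s = ((c * ip W s)%:C)%C *: rho' + ((ip Y s)%:C)%C *: tau.
Proof.
move=> [hs _]; rewrite /mpmap2 /mpmap -scalemxAl mxtraceZ !mxtrace_psdM //.
by rewrite rmorphM.
Qed.

Lemma mp_rho c tau : mp c tau rho = ((c * p)%:C)%C *: rho'.
Proof. by rewrite mpE // ipBl ipWZ_rho subrr rmorph0 scale0r addr0. Qed.

Lemma mp_le1 (c : R) : 0 <= c <= 1 -> loewner ((c%:C)%C *: W + Y) 1%:M.
Proof.
move=> /andP[c_ge0 c_le1]; rewrite /loewner.
have -> : 1%:M - ((c%:C)%C *: W + Y) = (1%:M - Z) + ((1 - c)%:C)%C *: W.
  by rewrite rmorphB /= scalerBl scale1r opprD opprB addrA addrACA [RHS]addrACA [- Z + _]addrC.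
by apply: psdD hZ1 (psdZ _ hW); rewrite ler0c subr_ge0.
Qed.

Lemma Ptrans_ge_mp (c : R) tau : 0 <= c <= 1 -> density tau ->
  (forall s, F s -> exists s' q, [/\ F' s', 0 <= q <= 1 & mp c tau s = (q%:C)%C *: s']) ->
  ((c * p)%:E <= Ptrans F F' rho rho')%E.
Proof.
move=> c01 htau mp_free.
have cW_psd : psd ((c%:C)%C *: W) by apply: psdZ; case/andP: c01; rewrite ?ler0c.
apply: ereal_sup_ubound; exists (c * p) => //; exists (mp c tau); split; last exact: mp_rho.
split; first exact: mpmap2_cp cW_psd hrho'.1 hWZ htau.1.
split; first exact: mpmap2_tni hrho'.2 htau.2 (mp_le1 c01).
by move=> s /mp_free [s' [q [? ? ?]]]; exists s', q.
Qed.

Lemma mp_free_decomp (c l : R) s1 tau : F' s1 -> F' tau -> 1 <= l -> 0 <= c <= 1 ->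
  rho' = (l%:C)%C *: s1 - ((l - 1)%:C)%C *: tau ->
  (forall s, F s -> c * (l - 1) * ip W s <= ip Y s) ->
  forall s, F s -> exists s' q, [/\ F' s', 0 <= q <= 1 & mp c tau s = (q%:C)%C *: s'].
Proof.
move=> Fs1 Ftau l_ge1 /andP[c_ge0 c_le1] rho'E Y_ge s Fs.
have [w_ge0 y_ge0 wy_le1] := ip_free_bounds Fs; have := Y_ge s Fs.
set w := ip W s; set y := ip Y s => Y_ge_s.
have [|||s' [q [F's' q01 s'E]]] := free_subconv hF' (a := c * w * l) (b := y - c * w * (l - 1)) Fs1 Ftau.
- by rewrite !mulr_ge0 // (le_trans ler01).
- by rewrite subr_ge0 mulrAC.
- by nra.
exists s', q; split=> //; rewrite (mpE _ _ (F_density Fs)) -s'E rho'E scalerBr !scalerA -!rmorphM.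
by rewrite rmorphB scalerBl /= addrC addrCA addrC.
Qed.

Lemma Ptrans_ge_orth : F' !=set0 -> (forall s, F s -> ip W s <= 0) ->
  (p%:E <= Ptrans F F' rho rho')%E.
Proof.
move=> [s0 Fs0] W_le0; rewrite -[p]mul1r; apply: (Ptrans_ge_mp (tau := s0)).
- by rewrite ler01 lexx.
- exact: hF'.1.
move=> s Fs; have [w_ge0 y_ge0 wy_le1] := ip_free_bounds Fs.
have W_orth : ip W s = 0 by apply: le_anti; rewrite W_le0.
exists s0, (ip Y s); split=> //; first by rewrite y_ge0 -(add0r (ip Y s)) -W_orth.
by rewrite (mpE _ _ (F_density Fs)) W_orth mulr0 rmorph0 scale0r add0r.
Qed.

Lemma Ptrans_ge_free : F' rho' -> (p%:E <= Ptrans F F' rho rho')%E.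
Proof.
move=> F'rho'; rewrite -[p]mul1r; have c01 : 0 <= (1 : R) <= 1 by rewrite ler01 lexx.
apply: (Ptrans_ge_mp c01 hrho'); apply: (mp_free_decomp (l := 1) F'rho' F'rho') => //.
- by rewrite subrr rmorph0 scale0r subr0 rmorph1 scale1r.
- by move=> s Fs; rewrite subrr mulr0 mul0r; case: (ip_free_bounds Fs).
Qed.

Lemma Ptrans_ge_RFF (r : R) : RFF F' rho' = r%:E -> 1 < r ->
  (forall s, F s -> (r - 1) * ip W s <= ip Y s) -> (p%:E <= Ptrans F F' rho rho')%E.
Proof.
move=> RFFr r_gt1 Y_ge; have p_ge0 : 0 <= p by apply: ip_psd_ge0 hW hrho.1.
apply/lee_mul01Pr => [|c /andP[c_gt0 c_lt1]]; first by rewrite lee_fin.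
have r_lt : r - 1 < (r - 1) / c by rewrite ltr_pdivlMr // gtr_pMr ?subr_gt0.
have [|s1 [l [tau [Fs1 Ftau r_le_l l_lt rho'E]]]] :=
    RFF_lt_decomp hF' hrho' (la := 1 + (r - 1) / c).
  by rewrite RFFr lte_fin; lra.
rewrite RFFr lee_fin in r_le_l.
have l_gt1 : 0 < l - 1 by lra.
set c' := (r - 1) / (l - 1).
have c_le_c' : c <= c'.
  by rewrite /c' ler_pdivlMr // mulrC -ler_pdivlMr // ltW //; lra.
have c'_le1 : c' <= 1 by rewrite ler_pdivrMr // mul1r; lra.
have c'01 : 0 <= c' <= 1 by rewrite c'_le1 (le_trans (ltW c_gt0)).
apply: le_trans (Ptrans_ge_mp c'01 (hF'.1 _ Ftau) _).
  by rewrite -EFinM lee_fin ler_wpM2r.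
apply: mp_free_decomp rho'E _ => //; first lra.
by move=> s Fs; rewrite divfK ?gt_eqF //; apply: Y_ge.
Qed.

Lemma Ptrans_ge_feasible : F' !=set0 ->
  (forall s, F s -> ((ip W s)%:E <= einv (RFF F' rho') * (ip Z s)%:E)%E) ->
  (p%:E <= Ptrans F F' rho rho')%E.
Proof.
move=> F'_ne W_le; case RFFE: (RFF F' rho') W_le => [r||] W_le; last 2 first.
1-2: by apply: Ptrans_ge_orth => // s Fs; have := W_le s Fs; rewrite /= mul0e lee_fin.
have [r_gt1|r_le1] := ltrP 1 r; last first.
  apply/Ptrans_ge_free/(RFF_eq1_mem hF' hrho'); rewrite RFFE; congr (_%:E); apply: le_anti.
  by rewrite r_le1 -lee_fin -RFFE RFF_ge1.
apply: (Ptrans_ge_RFF RFFE r_gt1) => s Fs.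
have r_gt0 : 0 < r by apply: lt_trans r_gt1.
have ipZE : ip Z s = ip W s + ip Y s by rewrite ipBl addrC subrK.
have := W_le s Fs; rewrite /einv /= gt_eqF // -EFinM lee_fin ipZE.
by rewrite -(ler_pM2l r_gt0) mulrA mulfV ?gt_eqF // mul1r; nra.
Qed.

End LowerBound.

Lemma Hfun_le_Ptrans (R : realType) n m (F : set 'M[R[i]]_n) (F' : set 'M[R[i]]_m) rho rho' :
  (forall s, F s -> density s) -> free_set F' -> F' !=set0 -> density rho -> density rho' ->
  (Hfun F rho (RFF F' rho') <= Ptrans F F' rho rho')%E.
Proof.
move=> F_density hF' F'_ne hrho hrho'.
apply: ge_ereal_sup => _ [W [Z [hW [hWZ [hZ1 [ipWZ W_le]]]]] <-]; rewrite ipC.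
exact: Ptrans_ge_feasible F_density hF' hrho hrho' hW hWZ hZ1 ipWZ F'_ne W_le.
Qed.

Theorem theorem7 (R : realType) (n m : nat)
  (F : set 'M[R[i]]_n) (F' : set 'M[R[i]]_m)
  (hF : free_set F) (hF' : free_set F') (hF'0 : F' !=set0)
  (rho : 'M[R[i]]_n) (rho' : 'M[R[i]]_m)
  (hrho : density rho) (hrho' : density rho') :
  (Ptrans F F' rho rho' <= Hfun F rho (einv (VF F' rho')))%E /\
  (Hfun F rho (RFF F' rho') <= Ptrans F F' rho rho')%E.
Proof.
split; first exact: Ptrans_le_Hfun hF'.1 hrho'.
exact: Hfun_le_Ptrans hF.1 hF' hF'0 hrho hrho'.
Qed.
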